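(* Let $\delta,\kappa,a,\alpha>0$ and $\varphi\in(-\pi/2,\pi/2)$; put $d=2\pi\delta$, $\gamma=[-d,d]$, $\Gamma=\kappa\cos\varphi$, $q_0=\dfrac{2\pi\delta\kappa}{\cos\varphi}$. Let $\varepsilon^{(L)}:\gamma\to\mathbb{C}$ be continuous and write $\varepsilon^{(L)}(z)-1=\varepsilon_1(z)\exp[i\varepsilon_2(z)]$ with $\varepsilon_1,\varepsilon_2$ continuous, $\varepsilon_1(z)\ge1$ and $0\le\varepsilon_2(z)<\pi/2$ on $\gamma$; let $E_1=\max_{z\in\gamma}\varepsilon_1(z)=\max_{z\in\gamma}|\varepsilon^{(L)}(z)-1|$. Assume $$0<E_1q_0<1,\qquad \alpha<\alpha_0^{(1)}:=\frac{4}{27}\,\frac{1}{a^2}\,\frac{(1-E_1q_0)^3}{q_0}.$$ Then $P_K^{(1)}(p)=\alpha q_0p^3-(1-E_1q_0)p+a$ has two positive zeros $p_1^{(1)}<p_2^{(1)}$. Let $p\in(p_1^{(1)},p_2^{(1)})$ satisfy $$t_1:=q_0\bigl(E_1+3\alpha p^2\bigr)<1,$$ and assume $0<\alpha<\min\{\alpha_0^{(1)},\alpha_1^{(1)}\}$ with $\alpha_1^{(1)}=\frac13\bigl[q_0(1-E_1q_0)\bigr]^{-1}$. Then the operator $T$ maps $\bar S_p=\{U\in C(\gamma):\|U\|\le p\}$ into itself and $\|T(U)-T(V)\|\le t_1\|U-V\|$ for all $U,V\in\bar S_p$.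
   Context: $C(\gamma)$ is the Banach space of continuous complex-valued functions on $\gamma$ with norm $\|U\|=\max_{z\in\gamma}|U(z)|$. The operator $T:C(\gamma)\to C(\gamma)$ is $$T(U)(z)=a\,e^{-i\Gamma(z-d)}-\frac{i\kappa^2}{2\Gamma}\int_{-d}^{d}e^{i\Gamma|z-z_0|}\Bigl[1-\varepsilon^{(L)}(z_0)-\alpha|U(z_0)|^2\Bigr]U(z_0)\,dz_0,$$ whose fixed points are the solutions of the integral equation $(\ast)$: $U(z)+\frac{i\kappa^2}{2\Gamma}\int_{-d}^{d}e^{i\Gamma|z-z_0|}[1-(\varepsilon^{(L)}(z_0)+\alpha|U(z_0)|^2)]U(z_0)dz_0=a e^{-i\Gamma(z-d)}$, $z\in\gamma$ (here with a complex-valued, i.e. lossy, permittivity $\varepsilon^{(L)}$). *)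

From Stdlib Require Import Reals Lra ClassicalEpsilon.
Open Scope R_scope.

Definition Cx : Type := (R * R)%type.
Definition Cre (u : Cx) : R := fst u.
Definition Cim (u : Cx) : R := snd u.
Definition Cof (x : R) : Cx := (x, 0).
Definition Ci : Cx := (0, 1).
Definition Cadd (u v : Cx) : Cx := (fst u + fst v, snd u + snd v).
Definition Copp (u : Cx) : Cx := (- fst u, - snd u).
Definition Csub (u v : Cx) : Cx := Cadd u (Copp v).
Definition Cmul (u v : Cx) : Cx :=
  (fst u * fst v - snd u * snd v, fst u * snd v + snd u * fst v).
Definition Cmod (u : Cx) : R := sqrt (fst u ^ 2 + snd u ^ 2).
Definition Cexpi (t : R) : Cx := (cos t, sin t).

Definition in_seg (d z : R) : Prop := - d <= z <= d.

Definition Ccont_on (d : R) (f : R -> Cx) : Prop :=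
  forall z, in_seg d z -> forall eps, 0 < eps ->
    exists del, 0 < del /\
      forall y, in_seg d y -> Rabs (y - z) < del -> Cmod (Csub (f y) (f z)) < eps.

Definition Rcont_on (d : R) (f : R -> R) : Prop :=
  forall z, in_seg d z -> forall eps, 0 < eps ->
    exists del, 0 < del /\
      forall y, in_seg d y -> Rabs (y - z) < del -> Rabs (f y - f z) < eps.

(* the norm of C(gamma): max_{z in gamma} |U z|, realised as the least upper
   bound of {|U z| : z in gamma} (equal to the max for continuous U) *)
Definition sup_norm (d : R) (U : R -> Cx) : R :=
  epsilon (inhabits 0)
    (fun m => is_lub (fun y => exists z, in_seg d z /\ y = Cmod (U z)) m).

(* Riemann integral of a real function on [a,b] (value of RiemannInt; the
   integrands used below are continuous, hence Riemann integrable) *)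
Definition Rint (f : R -> R) (a b : R) : R :=
  epsilon (inhabits 0)
    (fun I => exists pr : Riemann_integrable f a b, RiemannInt pr = I).

Definition Cint (f : R -> Cx) (a b : R) : Cx :=
  (Rint (fun x => fst (f x)) a b, Rint (fun x => snd (f x)) a b).

Definition T_op (a kappa Gam d alpha : R) (epsL : R -> Cx) (U : R -> Cx)
    : R -> Cx :=
  fun z =>
    Csub (Cmul (Cof a) (Cexpi (- (Gam * (z - d)))))
      (Cmul (Cmul Ci (Cof (kappa ^ 2 / (2 * Gam))))
        (Cint (fun z0 =>
           Cmul (Cexpi (Gam * Rabs (z - z0)))
             (Cmul (Csub (Csub (Cof 1) (epsL z0)) (Cof (alpha * Cmod (U z0) ^ 2)))
                   (U z0)))
          (- d) d)).

Definition PK1 (alpha q0 E1 a p : R) : R :=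
  alpha * q0 * p ^ 3 - (1 - E1 * q0) * p + a.

(* The cubic part
   is pure algebra plus the intermediate value theorem.  The analytic core
   is a pair of pointwise estimates on the nonlinearity
   N(u) = [1 - eps - alpha |u|^2] u on the ball |u| <= p: |N(u)| <= (E1 + alpha
   p^2) p and N is (E1 + 3 alpha p^2)-Lipschitz.  Integrating them against the
   unimodular kernel e^{i Gam |z - z0|} with prefactor kappa^2 / (2 Gam) gives
   ||T U|| <= a + q0 (E1 + alpha p^2) p, which is <= p exactly because
   P_K^(1)(p) < 0 between the roots, and ||T U - T V|| <= t1 ||U - V||. *)

From Stdlib Require Import Reals Lra ClassicalEpsilon FunctionalExtensionality.
Open Scope R_scope.

(* Complex identities between expressions built from Cadd, Csub, Cmul, ...
   reduce to two real ring identities, one per component. *)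
Ltac Cx_ring :=
  unfold Csub, Cadd, Copp, Cmul, Cof, Ci; simpl; f_equal; ring.

Lemma Csub_mul_l k X Y : Csub (Cmul k X) (Cmul k Y) = Cmul k (Csub X Y).
Proof. Cx_ring. Qed.

Lemma Csub_mul_r k X Y : Csub (Cmul X k) (Cmul Y k) = Cmul (Csub X Y) k.
Proof. Cx_ring. Qed.

Lemma Csub_sub_sub A1 B1 A2 B2 :
  Csub (Csub A1 B1) (Csub A2 B2) = Csub (Csub A1 A2) (Csub B1 B2).
Proof. Cx_ring. Qed.

Lemma Cmod_nonneg u : 0 <= Cmod u.
Proof. apply sqrt_pos. Qed.

Lemma Cmod_sq u : Cmod u ^ 2 = fst u ^ 2 + snd u ^ 2.
Proof. unfold Cmod; rewrite pow2_sqrt; nra. Qed.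

Lemma Cmod_le_of_sq u M : 0 <= M -> fst u ^ 2 + snd u ^ 2 <= M ^ 2 -> Cmod u <= M.
Proof.
  intros HM H; unfold Cmod; rewrite <- (sqrt_pow2 M HM).
  apply sqrt_le_1; nra.
Qed.

Lemma Cmod_fst u : Rabs (fst u) <= Cmod u.
Proof.
  pose proof (Cmod_sq u); pose proof (Cmod_nonneg u).
  apply Rabs_le; split; nra.
Qed.

Lemma Cmod_snd u : Rabs (snd u) <= Cmod u.
Proof.
  pose proof (Cmod_sq u); pose proof (Cmod_nonneg u).
  apply Rabs_le; split; nra.
Qed.

Lemma Cmod_mul u v : Cmod (Cmul u v) = Cmod u * Cmod v.
Proof. unfold Cmod, Cmul; simpl; rewrite <- sqrt_mult by nra; f_equal; ring. Qed.

Lemma Cmod_opp u : Cmod (Copp u) = Cmod u.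
Proof. unfold Cmod, Copp; simpl; f_equal; ring. Qed.

Lemma Cmod_Cof x : Cmod (Cof x) = Rabs x.
Proof. unfold Cmod, Cof; simpl; rewrite <- sqrt_Rsqr_abs; unfold Rsqr; f_equal; ring. Qed.

Lemma Cmod_Cexpi t : Cmod (Cexpi t) = 1.
Proof.
  unfold Cmod, Cexpi; cbn [fst snd]; pose proof (sin2_cos2 t) as H; unfold Rsqr in H.
  replace (cos t ^ 2 + sin t ^ 2) with 1 by nra; apply sqrt_1.
Qed.

Lemma Cmod_Ci : Cmod Ci = 1.
Proof.
  unfold Cmod, Ci; simpl; replace (0 * (0 * 1) + 1 * (1 * 1)) with 1 by ring; apply sqrt_1.
Qed.

(* Triangle inequality, via the Cauchy-Schwarz inequality [sqrt_cauchy]. *)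
Lemma Cmod_add u v : Cmod (Cadd u v) <= Cmod u + Cmod v.
Proof.
  pose proof (Cmod_nonneg u); pose proof (Cmod_nonneg v).
  pose proof (Cmod_sq u); pose proof (Cmod_sq v).
  pose proof (sqrt_cauchy (fst u) (snd u) (fst v) (snd v)) as Hcs.
  unfold Rsqr in Hcs.
  replace (sqrt (fst u * fst u + snd u * snd u)) with (Cmod u) in Hcs
    by (unfold Cmod; f_equal; ring).
  replace (sqrt (fst v * fst v + snd v * snd v)) with (Cmod v) in Hcs
    by (unfold Cmod; f_equal; ring).
  apply Cmod_le_of_sq; unfold Cadd; simpl; nra.
Qed.

Lemma Cmod_sub_le u v : Cmod (Csub u v) <= Cmod u + Cmod v.
Proof. unfold Csub; rewrite <- (Cmod_opp v); apply Cmod_add. Qed.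

Lemma Cmod_sub_comm u v : Cmod (Csub u v) = Cmod (Csub v u).
Proof.
  replace (Csub u v) with (Copp (Csub v u)) by Cx_ring; apply Cmod_opp.
Qed.

Lemma Cmod_sub_diag_l A X : Cmod (Csub (Csub A A) X) = Cmod X.
Proof. replace (Csub (Csub A A) X) with (Copp X) by Cx_ring; apply Cmod_opp. Qed.

Lemma Cmod_rev u v : Rabs (Cmod u - Cmod v) <= Cmod (Csub u v).
Proof.
  pose proof (Cmod_add (Csub u v) v) as Hu.
  pose proof (Cmod_add (Csub v u) u) as Hv.
  replace (Cadd (Csub u v) v) with u in Hu by (destruct u; Cx_ring).
  replace (Cadd (Csub v u) u) with v in Hv by (destruct v; Cx_ring).
  rewrite Cmod_sub_comm in Hv; apply Rabs_le; lra.
Qed.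

Lemma Rabs_sin_le x : Rabs (sin x) <= Rabs x.
Proof.
  assert (Hpos : forall y, 0 < y -> - y <= sin y < y).
  { intros y Hy; split; [|apply sin_lt_x; lra].
    destruct (Rle_lt_dec 1 y).
    - pose proof (SIN_bound y); lra.
    - pose proof PI2_3_2; assert (0 <= sin y) by (apply sin_ge_0; lra); lra. }
  destruct (Rtotal_order x 0) as [H|[H|H]].
  - pose proof (Hpos (- x) ltac:(lra)) as Hs; rewrite sin_neg in Hs.
    rewrite (Rabs_left x H); apply Rabs_le; lra.
  - subst; rewrite sin_0, Rabs_R0; lra.
  - pose proof (Hpos x H); rewrite (Rabs_pos_eq x) by lra; apply Rabs_le; lra.
Qed.

(* |e^{is} - e^{it}|^2 = 4 sin^2((s-t)/2) <= (s-t)^2. *)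
Lemma Cexpi_lip s t : Cmod (Csub (Cexpi s) (Cexpi t)) <= Rabs (s - t).
Proof.
  apply Cmod_le_of_sq; [apply Rabs_pos|]; unfold Csub, Cadd, Copp, Cexpi; simpl.
  pose proof (cos_2a_sin ((s - t) / 2)) as Hhalf.
  replace (2 * ((s - t) / 2)) with (s - t) in Hhalf by field.
  rewrite cos_minus in Hhalf.
  pose proof (sin2_cos2 s); pose proof (sin2_cos2 t); unfold Rsqr in *.
  assert (sin ((s - t) / 2) ^ 2 <= ((s - t) / 2) ^ 2).
  { rewrite <- (pow2_abs (sin _)), <- (pow2_abs ((s - t) / 2)).
    pose proof (Rabs_sin_le ((s - t) / 2)); pose proof (Rabs_pos (sin ((s - t) / 2))); nra. }
  assert (Rabs (s - t) * Rabs (s - t) = (s - t) * (s - t))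
    by (rewrite <- Rabs_mult; apply Rabs_pos_eq; nra).
  nra.
Qed.

Lemma Cexpi_abs_lip Gam y z t : 0 <= Gam ->
  Cmod (Csub (Cexpi (Gam * Rabs (y - t))) (Cexpi (Gam * Rabs (z - t))))
    <= Gam * Rabs (y - z).
Proof.
  intros HG; eapply Rle_trans; [apply Cexpi_lip|].
  replace (Gam * Rabs (y - t) - Gam * Rabs (z - t))
    with (Gam * (Rabs (y - t) - Rabs (z - t))) by ring.
  rewrite Rabs_mult, (Rabs_pos_eq Gam HG); apply Rmult_le_compat_l; auto.
  eapply Rle_trans; [apply Rabs_triang_inv2|]; right; f_equal; ring.
Qed.

(** Stdlib's compactness results ([continuity_ab_maj],
    [continuity_implies_RiemannInt]) ask for continuity at every point of
    [R]; a function continuous on the segment is brought into that setting by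
    precomposing with the retraction [clamp d] of [R] onto [-d, d]. *)

Definition clamp (d x : R) : R := Rmax (- d) (Rmin d x).

Lemma clamp_in d x : 0 <= d -> in_seg d (clamp d x).
Proof.
  intros; unfold clamp, in_seg, Rmax, Rmin.
  destruct (Rle_dec d x); destruct (Rle_dec (- d) _); lra.
Qed.

Lemma clamp_id d x : in_seg d x -> clamp d x = x.
Proof.
  unfold clamp, in_seg, Rmax, Rmin; intros.
  destruct (Rle_dec d x); destruct (Rle_dec (- d) _); lra.
Qed.

Lemma clamp_lip d x y : 0 <= d -> Rabs (clamp d x - clamp d y) <= Rabs (x - y).
Proof.
  intros; unfold clamp, Rmax, Rmin.
  destruct (Rle_dec d x); destruct (Rle_dec d y);
  repeat match goal with |- context [Rle_dec ?a ?b] => destruct (Rle_dec a b) end;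
  unfold Rabs; repeat destruct Rcase_abs; lra.
Qed.

Lemma Rcont_clamp d f c : 0 <= d -> Rcont_on d f ->
  continuity_pt (fun x => f (clamp d x)) c.
Proof.
  intros Hd Hf; unfold continuity_pt, continue_in, limit1_in, limit_in; simpl.
  unfold R_dist; intros eps Heps.
  destruct (Hf (clamp d c) (clamp_in d c Hd) eps Heps) as [del [Hdel H]].
  exists del; split; auto; intros x [_ Hx].
  apply H; [apply clamp_in; auto|].
  eapply Rle_lt_trans; [apply clamp_lip; auto | auto].
Qed.

Lemma Rcont_fst d F : Ccont_on d F -> Rcont_on d (fun z => fst (F z)).
Proof.
  intros H z Hz eps He; destruct (H z Hz eps He) as [del [Hd K]].
  exists del; split; auto; intros y Hy Hyz.
  eapply Rle_lt_trans; [apply (Cmod_fst (Csub (F y) (F z))) | apply K; auto].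
Qed.

Lemma Rcont_snd d F : Ccont_on d F -> Rcont_on d (fun z => snd (F z)).
Proof.
  intros H z Hz eps He; destruct (H z Hz eps He) as [del [Hd K]].
  exists del; split; auto; intros y Hy Hyz.
  eapply Rle_lt_trans; [apply (Cmod_snd (Csub (F y) (F z))) | apply K; auto].
Qed.

Lemma Rcont_Cmod d F : Ccont_on d F -> Rcont_on d (fun z => Cmod (F z)).
Proof.
  intros H z Hz eps He; destruct (H z Hz eps He) as [del [Hd K]].
  exists del; split; auto; intros y Hy Hyz.
  eapply Rle_lt_trans; [apply Cmod_rev | apply K; auto].
Qed.

Lemma Rcont_bounded d f : 0 <= d -> Rcont_on d f ->
  exists M, forall z, in_seg d z -> f z <= M.
Proof.
  intros Hd Hf.
  destruct (continuity_ab_maj (fun x => f (clamp d x)) (- d) d ltac:(lra)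
              (fun c _ => Rcont_clamp d f c Hd Hf)) as [x [HM _]].
  exists (f (clamp d x)); intros z Hz; rewrite <- (clamp_id d z Hz); apply (HM z Hz).
Qed.

Lemma Ccont_bounded d F : 0 <= d -> Ccont_on d F ->
  exists M, forall z, in_seg d z -> Cmod (F z) <= M.
Proof. intros Hd HF; exact (Rcont_bounded d _ Hd (Rcont_Cmod d F HF)). Qed.

Lemma Rcont_integrable d f : 0 <= d -> Rcont_on d f -> Riemann_integrable f (- d) d.
Proof.
  intros Hd Hf; apply Riemann_integrable_ext with (f := fun x => f (clamp d x)).
  - intros x Hx; rewrite Rmin_left, Rmax_right in Hx by lra; rewrite clamp_id; auto.
  - apply continuity_implies_RiemannInt; [lra|]; intros; apply Rcont_clamp; auto.
Qed.

Lemma Rint_eq f a b (pr : Riemann_integrable f a b) : Rint f a b = RiemannInt pr.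
Proof.
  unfold Rint.
  destruct (epsilon_spec (inhabits 0)
              (fun I => exists pr : Riemann_integrable f a b, RiemannInt pr = I))
    as [pr' <-]; [exists (RiemannInt pr), pr; reflexivity|].
  apply RiemannInt_P5.
Qed.

Lemma Rint_comb f g a b k1 k2 :
  Riemann_integrable f a b -> Riemann_integrable g a b ->
  Rint (fun x => k1 * f x + k2 * g x) a b = k1 * Rint f a b + k2 * Rint g a b.
Proof.
  intros pf pg.
  pose proof (@Riemann_integrable_scal f a b k1 pf) as pkf.
  rewrite (Rint_eq _ _ _ (RiemannInt_P10 k2 pkf pg)), (Rint_eq _ _ _ pf),
    (Rint_eq _ _ _ pg), (RiemannInt_P13 pkf pg).
  assert (Hscal : RiemannInt pkf = k1 * RiemannInt pf).
  { pose proof (RiemannInt_P14 a b 0) as p0.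
    assert (Heq : (fun x => k1 * f x) = (fun x => fct_cte 0 x + k1 * f x))
      by (apply functional_extensionality; intros; unfold fct_cte; ring).
    revert pkf; rewrite Heq; intros pkf.
    rewrite (RiemannInt_P13 p0 pf pkf), RiemannInt_P15; ring. }
  rewrite Hscal; ring.
Qed.

Lemma Rint_le_const f a b u : a <= b -> Riemann_integrable f a b ->
  (forall x, a < x < b -> f x <= u) -> Rint f a b <= u * (b - a).
Proof.
  intros Hab pf Hu; rewrite (Rint_eq _ _ _ pf), <- (RiemannInt_P15 (RiemannInt_P14 a b u)).
  apply RiemannInt_P19; auto.
Qed.

Lemma Ccont_integrable d F : 0 <= d -> Ccont_on d F ->
  Riemann_integrable (fun x => fst (F x)) (- d) d *
  Riemann_integrable (fun x => snd (F x)) (- d) d.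
Proof.
  intros Hd HF; split; apply Rcont_integrable; auto;
    [apply Rcont_fst | apply Rcont_snd]; auto.
Qed.

Lemma Cint_sub d F G : 0 <= d -> Ccont_on d F -> Ccont_on d G ->
  Csub (Cint F (- d) d) (Cint G (- d) d) = Cint (fun x => Csub (F x) (G x)) (- d) d.
Proof.
  intros Hd HF HG.
  destruct (Ccont_integrable d F Hd HF) as [F1 F2].
  destruct (Ccont_integrable d G Hd HG) as [G1 G2].
  unfold Cint, Csub, Cadd, Copp; simpl; f_equal.
  - replace (fun x => fst (F x) + - fst (G x))
      with (fun x => 1 * fst (F x) + -1 * fst (G x))
      by (apply functional_extensionality; intros; ring).
    rewrite Rint_comb by auto; ring.
  - replace (fun x => snd (F x) + - snd (G x))
      with (fun x => 1 * snd (F x) + -1 * snd (G x))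
      by (apply functional_extensionality; intros; ring).
    rewrite Rint_comb by auto; ring.
Qed.

(* |int F| <= 2 d sup|F|: with c = int F, |c|^2 = int <c, F(x)> <= |c| 2 d C
   by Cauchy-Schwarz under the integral; then divide by |c|. *)
Lemma Cint_bound d F C : 0 <= d -> Ccont_on d F ->
  (forall z, in_seg d z -> Cmod (F z) <= C) -> Cmod (Cint F (- d) d) <= 2 * d * C.
Proof.
  intros Hd HF HC.
  destruct (Ccont_integrable d F Hd HF) as [F1 F2].
  set (c1 := Rint (fun x => fst (F x)) (- d) d).
  set (c2 := Rint (fun x => snd (F x)) (- d) d).
  set (M := Cmod (Cint F (- d) d)).
  assert (HM0 : 0 <= M) by apply Cmod_nonneg.
  assert (HM2 : M ^ 2 = c1 * c1 + c2 * c2)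
    by (unfold M; rewrite Cmod_sq; unfold Cint; simpl; fold c1 c2; ring).
  assert (Hpointwise : forall x, - d < x < d -> c1 * fst (F x) + c2 * snd (F x) <= M * C).
  { intros x Hx.
    pose proof (sqrt_cauchy c1 c2 (fst (F x)) (snd (F x))) as Hcs.
    replace (sqrt (c1² + c2²)) with M in Hcs
      by (unfold M, Cmod, Cint, Rsqr; simpl; fold c1 c2; f_equal; ring).
    replace (sqrt ((fst (F x))² + (snd (F x))²)) with (Cmod (F x)) in Hcs
      by (unfold Cmod, Rsqr; f_equal; ring).
    assert (Cmod (F x) <= C) by (apply HC; red; lra); nra. }
  pose proof (Rint_le_const (fun x => c1 * fst (F x) + c2 * snd (F x)) (- d) d (M * C)
                ltac:(lra) (RiemannInt_P10 c2 (@Riemann_integrable_scal _ _ _ c1 F1) F2)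
                Hpointwise) as Hle.
  rewrite Rint_comb in Hle by auto; fold c1 c2 in Hle.
  destruct (Rle_lt_dec M 0) as [HM|HM].
  - assert (0 <= C) by (eapply Rle_trans; [apply Cmod_nonneg | apply (HC 0); red; lra]).
    assert (0 <= 2 * d * C) by (apply Rmult_le_pos; lra); lra.
  - apply Rmult_le_reg_l with M; auto; nra.
Qed.

Lemma sup_norm_is_lub d U : 0 <= d -> Ccont_on d U ->
  is_lub (fun y => exists z, in_seg d z /\ y = Cmod (U z)) (sup_norm d U).
Proof.
  intros Hd HU; destruct (Ccont_bounded d U Hd HU) as [M HM].
  unfold sup_norm; apply epsilon_spec.
  destruct (completeness (fun y => exists z, in_seg d z /\ y = Cmod (U z))) as [m Hm].
  - exists M; intros y [z [Hz ->]]; auto.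
  - exists (Cmod (U 0)), 0; split; auto; red; lra.
  - exists m; auto.
Qed.

Lemma sup_norm_le d U M : 0 <= d -> Ccont_on d U ->
  (forall z, in_seg d z -> Cmod (U z) <= M) -> sup_norm d U <= M.
Proof.
  intros Hd HU HM; apply (proj2 (sup_norm_is_lub d U Hd HU)).
  intros y [z [Hz ->]]; auto.
Qed.

Lemma sup_norm_ge d U z : 0 <= d -> Ccont_on d U -> in_seg d z ->
  Cmod (U z) <= sup_norm d U.
Proof. intros Hd HU Hz; apply (proj1 (sup_norm_is_lub d U Hd HU)); exists z; auto. Qed.

Lemma Ccont_lip d F L : 0 <= L ->
  (forall y z, in_seg d y -> in_seg d z -> Cmod (Csub (F y) (F z)) <= L * Rabs (y - z)) ->
  Ccont_on d F.
Proof.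
  intros HL H z Hz eps He; exists (eps / (L + 1)); split; [apply Rdiv_lt_0_compat; lra|].
  intros y Hy Hyz; eapply Rle_lt_trans; [apply H; auto|].
  apply Rle_lt_trans with (L * (eps / (L + 1))); [apply Rmult_le_compat_l; lra|].
  apply Rlt_le_trans with ((L + 1) * (eps / (L + 1))); [|right; field; lra].
  apply Rmult_lt_compat_r; [apply Rdiv_lt_0_compat|]; lra.
Qed.

Lemma Ccont_const d c : Ccont_on d (fun _ => c).
Proof.
  apply Ccont_lip with 0; [lra|]; intros.
  replace (Csub c c) with (Cof 0) by (destruct c; Cx_ring).
  rewrite Cmod_Cof, Rabs_R0; lra.
Qed.

Lemma Ccont_sub d F G : Ccont_on d F -> Ccont_on d G ->
  Ccont_on d (fun z => Csub (F z) (G z)).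
Proof.
  intros HF HG z Hz eps He.
  destruct (HF z Hz (eps / 2) ltac:(lra)) as [d1 [Hd1 K1]].
  destruct (HG z Hz (eps / 2) ltac:(lra)) as [d2 [Hd2 K2]].
  exists (Rmin d1 d2); split; [apply Rmin_pos; auto|]; intros y Hy Hyz.
  replace (Csub (Csub (F y) (G y)) (Csub (F z) (G z)))
    with (Csub (Csub (F y) (F z)) (Csub (G y) (G z))) by Cx_ring.
  eapply Rle_lt_trans; [apply Cmod_sub_le|].
  pose proof (Rmin_l d1 d2); pose proof (Rmin_r d1 d2).
  pose proof (K1 y Hy ltac:(lra)); pose proof (K2 y Hy ltac:(lra)); lra.
Qed.

(* Products of continuous functions are continuous; the factors are bounded
   on the segment, which makes the usual epsilon/3 argument uniform. *)
Lemma Ccont_mul d F G : 0 <= d -> Ccont_on d F -> Ccont_on d G ->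
  Ccont_on d (fun z => Cmul (F z) (G z)).
Proof.
  intros Hd HF HG.
  destruct (Ccont_bounded d F Hd HF) as [MF BF].
  destruct (Ccont_bounded d G Hd HG) as [MG BG].
  intros z Hz eps He.
  assert (HMF : 0 <= MF) by (eapply Rle_trans; [apply Cmod_nonneg | apply (BF z Hz)]).
  assert (HMG : 0 <= MG) by (eapply Rle_trans; [apply Cmod_nonneg | apply (BG z Hz)]).
  set (e := eps / (MF + MG + 1)).
  assert (He' : 0 < e) by (apply Rdiv_lt_0_compat; lra).
  assert (Hee : e * (MF + MG + 1) = eps) by (unfold e; field; lra).
  destruct (HF z Hz e He') as [d1 [Hd1 K1]].
  destruct (HG z Hz e He') as [d2 [Hd2 K2]].
  exists (Rmin d1 d2); split; [apply Rmin_pos; auto|]; intros y Hy Hyz.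
  replace (Csub (Cmul (F y) (G y)) (Cmul (F z) (G z)))
    with (Cadd (Cmul (F y) (Csub (G y) (G z))) (Cmul (Csub (F y) (F z)) (G z)))
    by Cx_ring.
  eapply Rle_lt_trans; [apply Cmod_add|]; rewrite !Cmod_mul.
  pose proof (Rmin_l d1 d2); pose proof (Rmin_r d1 d2).
  pose proof (K1 y Hy ltac:(lra)); pose proof (K2 y Hy ltac:(lra)).
  pose proof (BF y Hy); pose proof (BG z Hz).
  pose proof (Cmod_nonneg (F y)); pose proof (Cmod_nonneg (G z)).
  pose proof (Cmod_nonneg (Csub (G y) (G z))); pose proof (Cmod_nonneg (Csub (F y) (F z))).
  nra.
Qed.

Lemma Ccont_Cmod d U : Ccont_on d U -> Ccont_on d (fun z => Cof (Cmod (U z))).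
Proof.
  intros H z Hz eps He; destruct (H z Hz eps He) as [del [Hd K]].
  exists del; split; auto; intros y Hy Hyz.
  replace (Csub (Cof (Cmod (U y))) (Cof (Cmod (U z)))) with (Cof (Cmod (U y) - Cmod (U z)))
    by Cx_ring.
  rewrite Cmod_Cof; eapply Rle_lt_trans; [apply Cmod_rev | auto].
Qed.

(* Two distinct roots p1, p2 of the cubic (which has no p^2 term) determine
   its third root -(p1 + p2). *)
Lemma cubic_factor A B a p1 p2 x :
  p1 <> p2 -> A * p1 ^ 3 - B * p1 + a = 0 -> A * p2 ^ 3 - B * p2 + a = 0 ->
  A * x ^ 3 - B * x + a = A * (x - p1) * (x - p2) * (x + p1 + p2).
Proof.
  intros Hne H1 H2.
  assert (HB : B = A * (p1 ^ 2 + p1 * p2 + p2 ^ 2)).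
  { apply Rmult_eq_reg_l with (p1 - p2); [|lra].
    replace ((p1 - p2) * B) with (A * p1 ^ 3 - A * p2 ^ 3) by lra; ring. }
  subst B; assert (a = A * p1 * p2 * (p1 + p2)) by lra; subst a; ring.
Qed.

(* Below its discriminant threshold 27 a^2 A < 4 B^3 the cubic is negative at
   its positive critical point ps = sqrt (B / 3A); since it is a > 0 at 0 and
   at L = sqrt (B / A), the intermediate value theorem gives a root in each of
   (0, ps) and (ps, L). *)
Lemma cubic_two_roots A B a : 0 < A -> 0 < B -> 0 < a -> a * a * A < 4 * B ^ 3 / 27 ->
  exists p1 p2, 0 < p1 < p2 /\
    A * p1 ^ 3 - B * p1 + a = 0 /\ A * p2 ^ 3 - B * p2 + a = 0.
Proof.
  intros HA HB Ha H.
  set (ps := sqrt (B / (3 * A))); set (L := sqrt (B / A)).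
  assert (Hps2 : ps * ps = B / (3 * A))
    by (apply sqrt_sqrt; apply Rlt_le, Rdiv_lt_0_compat; lra).
  assert (HL2 : L * L = B / A) by (apply sqrt_sqrt; apply Rlt_le, Rdiv_lt_0_compat; lra).
  assert (Hps0 : 0 < ps) by (apply sqrt_lt_R0, Rdiv_lt_0_compat; lra).
  assert (HpsL : ps < L)
    by (apply sqrt_lt_1; try (apply Rlt_le, Rdiv_lt_0_compat; lra);
        unfold Rdiv; apply Rmult_lt_compat_l; [lra|]; apply Rinv_lt_contravar; nra).
  assert (Eps : A * (ps * ps) = B / 3) by (rewrite Hps2; field; lra).
  assert (EL : A * (L * L) = B) by (rewrite HL2; field; lra).
  clearbody ps L.
  assert (Fps : A * ps ^ 3 - B * ps + a < 0).
  { assert (Hsq : a * a < (2 * B * ps / 3) * (2 * B * ps / 3)).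
    { apply Rmult_lt_reg_l with A; [lra|].
      replace (A * (2 * B * ps / 3 * (2 * B * ps / 3))) with (4 * B ^ 2 * (A * (ps * ps)) / 9)
        by field.
      rewrite Eps; nra. }
    assert (0 < 2 * B * ps / 3) by (apply Rdiv_lt_0_compat; nra).
    replace (A * ps ^ 3 - B * ps + a) with (ps * (A * (ps * ps)) - B * ps + a) by ring.
    rewrite Eps; nra. }
  assert (FL : A * L ^ 3 - B * L + a = a)
    by (replace (A * L ^ 3) with (A * (L * L) * L) by ring; rewrite EL; ring).
  destruct (IVT (fun x => - (A * x ^ 3 - B * x + a)) 0 ps ltac:(reg) Hps0)
    as [p1 [Hp1 Hf1]]; [simpl; lra | lra|].
  destruct (IVT (fun x => A * x ^ 3 - B * x + a) ps L ltac:(reg) HpsL)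
    as [p2 [Hp2 Hf2]]; [lra | lra|].
  exists p1, p2.
  assert (p1 <> 0) by (intro; subst; simpl in Hf1; lra).
  assert (p1 <> ps) by (intro; subst; lra).
  assert (p2 <> ps) by (intro; subst; lra).
  repeat split; lra.
Qed.

Lemma cubic_positive_roots A B a p1 p2 x : 0 < A -> 0 < p1 < p2 ->
  A * p1 ^ 3 - B * p1 + a = 0 -> A * p2 ^ 3 - B * p2 + a = 0 ->
  0 < x -> A * x ^ 3 - B * x + a = 0 -> x = p1 \/ x = p2.
Proof.
  intros HA Hp H1 H2 Hx Hroot.
  rewrite (cubic_factor A B a p1 p2 x ltac:(lra) H1 H2) in Hroot.
  assert (Hpos : 0 < x + p1 + p2) by lra.
  destruct (Rmult_integral _ _ Hroot) as [Hf|Hf]; [|lra].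
  destruct (Rmult_integral _ _ Hf) as [Hf'|Hf']; [|right; lra].
  destruct (Rmult_integral _ _ Hf') as [Hf''|Hf'']; [lra|left; lra].
Qed.

Lemma cubic_neg_between A B a p1 p2 p : 0 < A -> 0 < p1 < p2 ->
  A * p1 ^ 3 - B * p1 + a = 0 -> A * p2 ^ 3 - B * p2 + a = 0 ->
  p1 < p < p2 -> A * p ^ 3 - B * p + a < 0.
Proof.
  intros HA Hp H1 H2 Hpp.
  rewrite (cubic_factor A B a p1 p2 p ltac:(lra) H1 H2).
  assert (0 < A * (p - p1)) by (apply Rmult_lt_0_compat; lra).
  assert (A * (p - p1) * (p - p2) < 0) by nra; nra.
Qed.

Definition nonlin (alpha : R) (e u : Cx) : Cx :=
  Cmul (Csub (Csub (Cof 1) e) (Cof (alpha * Cmod u ^ 2))) u.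

Lemma Cmod_coef e c E1 : 0 <= c -> Cmod (Csub e (Cof 1)) <= E1 ->
  Cmod (Csub (Csub (Cof 1) e) (Cof c)) <= E1 + c.
Proof.
  intros Hc HE; eapply Rle_trans; [apply Cmod_sub_le|].
  rewrite Cmod_sub_comm, Cmod_Cof, Rabs_pos_eq by lra; lra.
Qed.

Lemma nonlin_bound alpha e u E1 p : 0 <= alpha -> Cmod (Csub e (Cof 1)) <= E1 ->
  Cmod u <= p -> Cmod (nonlin alpha e u) <= (E1 + alpha * p ^ 2) * p.
Proof.
  intros Ha HE Hu; unfold nonlin; rewrite Cmod_mul.
  pose proof (Cmod_nonneg u).
  assert (Hc : alpha * Cmod u ^ 2 <= alpha * p ^ 2) by (apply Rmult_le_compat_l; nra).
  pose proof (Cmod_coef e (alpha * Cmod u ^ 2) E1 ltac:(nra) HE).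
  apply Rmult_le_compat; auto; [apply Cmod_nonneg | lra].
Qed.

(* The cubic term u |-> |u|^2 u is 3 p^2-Lipschitz on the ball |u| <= p:
   |u|^2 u - |v|^2 v = |u|^2 (u - v) + (|u| - |v|)(|u| + |v|) v. *)
Lemma cube_lip u v p : Cmod u <= p -> Cmod v <= p ->
  Cmod (Csub (Cmul (Cof (Cmod u ^ 2)) u) (Cmul (Cof (Cmod v ^ 2)) v))
    <= 3 * p ^ 2 * Cmod (Csub u v).
Proof.
  intros Hu Hv.
  set (mu := Cmod u) in *; set (mv := Cmod v) in *.
  assert (Hmu : 0 <= mu) by apply Cmod_nonneg; assert (Hmv : 0 <= mv) by apply Cmod_nonneg.
  assert (Hrev : Rabs (mu - mv) <= Cmod (Csub u v)) by apply Cmod_rev.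
  replace (Csub (Cmul (Cof (mu ^ 2)) u) (Cmul (Cof (mv ^ 2)) v))
    with (Cadd (Cmul (Cof (mu ^ 2)) (Csub u v)) (Cmul (Cof ((mu - mv) * (mu + mv))) v))
    by (destruct u, v; Cx_ring).
  eapply Rle_trans; [apply Cmod_add|].
  rewrite !Cmod_mul, !Cmod_Cof, Rabs_mult; fold mv.
  rewrite (Rabs_pos_eq (mu ^ 2)) by nra; rewrite (Rabs_pos_eq (mu + mv)) by nra.
  set (w := Cmod (Csub u v)) in *.
  assert (Hw : 0 <= w) by (eapply Rle_trans; [apply Rabs_pos | exact Hrev]).
  assert (mu ^ 2 * w <= p ^ 2 * w) by (apply Rmult_le_compat_r; nra).
  assert (Rabs (mu - mv) * (mu + mv) * mv <= w * (2 * p) * p)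
    by (pose proof (Rabs_pos (mu - mv)); apply Rmult_le_compat; nra).
  nra.
Qed.

Lemma nonlin_lip alpha e u v E1 p : 0 <= alpha -> Cmod (Csub e (Cof 1)) <= E1 ->
  Cmod u <= p -> Cmod v <= p ->
  Cmod (Csub (nonlin alpha e u) (nonlin alpha e v)) <= (E1 + 3 * alpha * p ^ 2) * Cmod (Csub u v).
Proof.
  intros Ha HE Hu Hv; unfold nonlin.
  replace (Csub (Cmul (Csub (Csub (Cof 1) e) (Cof (alpha * Cmod u ^ 2))) u)
                (Cmul (Csub (Csub (Cof 1) e) (Cof (alpha * Cmod v ^ 2))) v))
    with (Csub (Cmul (Csub (Csub (Cof 1) e) (Cof 0)) (Csub u v))
               (Cmul (Cof alpha) (Csub (Cmul (Cof (Cmod u ^ 2)) u) (Cmul (Cof (Cmod v ^ 2)) v))))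
    by (destruct e, u, v; Cx_ring).
  eapply Rle_trans; [apply Cmod_sub_le|].
  rewrite !Cmod_mul, Cmod_Cof, (Rabs_pos_eq alpha Ha).
  pose proof (Cmod_coef e 0 E1 ltac:(lra) HE).
  pose proof (cube_lip u v p Hu Hv); pose proof (Cmod_nonneg (Csub u v)).
  assert (Cmod (Csub (Csub (Cof 1) e) (Cof 0)) * Cmod (Csub u v) <= E1 * Cmod (Csub u v))
    by (apply Rmult_le_compat_r; lra).
  assert (alpha * Cmod (Csub (Cmul (Cof (Cmod u ^ 2)) u) (Cmul (Cof (Cmod v ^ 2)) v))
            <= alpha * (3 * p ^ 2 * Cmod (Csub u v))) by (apply Rmult_le_compat_l; lra).
  nra.
Qed.

(** * The operator T

    Its integral
    term is controlled by the factor q = r (2 d), the length of the segment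
    times the prefactor. *)

Definition integrand (Gam alpha : R) (epsL U : R -> Cx) (z z0 : R) : Cx :=
  Cmul (Cexpi (Gam * Rabs (z - z0))) (nonlin alpha (epsL z0) (U z0)).

Lemma T_op_unfold a kappa Gam d alpha epsL U z :
  T_op a kappa Gam d alpha epsL U z =
  Csub (Cmul (Cof a) (Cexpi (- (Gam * (z - d)))))
       (Cmul (Cmul Ci (Cof (kappa ^ 2 / (2 * Gam))))
             (Cint (integrand Gam alpha epsL U z) (- d) d)).
Proof. reflexivity. Qed.

Lemma Cmod_prefactor r X : 0 <= r -> Cmod (Cmul (Cmul Ci (Cof r)) X) = r * Cmod X.
Proof. intros; rewrite !Cmod_mul, Cmod_Ci, Cmod_Cof, Rabs_pos_eq by auto; ring. Qed.

Section Operator.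

Variables (a kappa Gam d alpha E1 p : R) (epsL : R -> Cx).
Hypothesis Hd : 0 <= d.
Hypothesis HGam : 0 < Gam.
Hypothesis Ha : 0 <= a.
Hypothesis Halpha : 0 <= alpha.
Hypothesis HepsL : Ccont_on d epsL.
Hypothesis HE1 : forall z, in_seg d z -> Cmod (Csub (epsL z) (Cof 1)) <= E1.

Let r := kappa ^ 2 / (2 * Gam).
Let K := (E1 + alpha * p ^ 2) * p.

Lemma r_nonneg : 0 <= r.
Proof.
  unfold r, Rdiv; apply Rmult_le_pos; [apply pow2_ge_0 | apply Rlt_le, Rinv_0_lt_compat; lra].
Qed.

Lemma nonlin_cont U : Ccont_on d U -> Ccont_on d (fun z0 => nonlin alpha (epsL z0) (U z0)).
Proof.
  intros HU; unfold nonlin; apply Ccont_mul; auto.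
  apply Ccont_sub; [apply Ccont_sub; auto; apply Ccont_const|].
  replace (fun z => Cof (alpha * Cmod (U z) ^ 2))
    with (fun z => Cmul (Cof alpha) (Cmul (Cof (Cmod (U z))) (Cof (Cmod (U z)))))
    by (apply functional_extensionality; intros; Cx_ring).
  apply Ccont_mul, Ccont_mul; auto; [apply Ccont_const | apply Ccont_Cmod; auto ..].
Qed.

Lemma integrand_cont U z : Ccont_on d U -> Ccont_on d (integrand Gam alpha epsL U z).
Proof.
  intros HU; apply Ccont_mul; auto; [|apply nonlin_cont; auto].
  apply Ccont_lip with Gam; [lra|]; intros y t _ _.
  rewrite (Rabs_minus_sym z y), (Rabs_minus_sym z t); apply Cexpi_abs_lip; lra.
Qed.

Lemma nonlin_on_ball U : (forall z, in_seg d z -> Cmod (U z) <= p) ->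
  forall z0, in_seg d z0 -> Cmod (nonlin alpha (epsL z0) (U z0)) <= K.
Proof. intros HU z0 Hz0; apply nonlin_bound; auto. Qed.

Lemma T_op_bound U : Ccont_on d U -> (forall z, in_seg d z -> Cmod (U z) <= p) ->
  forall z, Cmod (T_op a kappa Gam d alpha epsL U z) <= a + r * (2 * d) * K.
Proof.
  intros HU Hball z; rewrite T_op_unfold; eapply Rle_trans; [apply Cmod_sub_le|].
  rewrite Cmod_prefactor, Cmod_mul, Cmod_Cof, Cmod_Cexpi, Rabs_pos_eq by (auto using r_nonneg).
  assert (Cmod (Cint (integrand Gam alpha epsL U z) (- d) d) <= 2 * d * K).
  { apply Cint_bound; auto; [apply integrand_cont; auto|].
    intros z0 Hz0; unfold integrand; rewrite Cmod_mul, Cmod_Cexpi, Rmult_1_l.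
    apply nonlin_on_ball; auto. }
  pose proof r_nonneg; fold r; nra.
Qed.

(* T(U) is Lipschitz in z, since both the plane wave and the kernel are. *)
Lemma T_op_lip U : Ccont_on d U -> (forall z, in_seg d z -> Cmod (U z) <= p) ->
  forall y z, in_seg d y -> in_seg d z ->
  Cmod (Csub (T_op a kappa Gam d alpha epsL U y) (T_op a kappa Gam d alpha epsL U z))
    <= (a + r * (2 * d) * K) * Gam * Rabs (y - z).
Proof.
  intros HU Hball y z Hy Hz; rewrite !T_op_unfold.
  rewrite Csub_sub_sub, (Csub_mul_l (Cmul Ci _)).
  eapply Rle_trans; [apply Cmod_sub_le|]; fold r.
  rewrite Cmod_prefactor by apply r_nonneg.
  rewrite Cint_sub by (auto; apply integrand_cont; auto).
  assert (Hwave : Cmod (Csub (Cmul (Cof a) (Cexpi (- (Gam * (y - d)))))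
                             (Cmul (Cof a) (Cexpi (- (Gam * (z - d))))))
                  <= a * (Gam * Rabs (y - z))).
  { rewrite Csub_mul_l, Cmod_mul, Cmod_Cof, Rabs_pos_eq by auto; apply Rmult_le_compat_l; auto.
    eapply Rle_trans; [apply Cexpi_lip|]; right.
    replace (- (Gam * (y - d)) - - (Gam * (z - d))) with (Gam * (z - y)) by ring.
    rewrite Rabs_mult, Rabs_pos_eq, Rabs_minus_sym by lra; reflexivity. }
  assert (Hint : Cmod (Cint (fun z0 => Csub (integrand Gam alpha epsL U y z0)
                                           (integrand Gam alpha epsL U z z0)) (- d) d)
                 <= 2 * d * (Gam * Rabs (y - z) * K)).
  { apply Cint_bound; auto; [apply Ccont_sub; apply integrand_cont; auto|].
    intros z0 Hz0; unfold integrand.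
    rewrite Csub_mul_r, Cmod_mul; apply Rmult_le_compat; try apply Cmod_nonneg.
    - apply Cexpi_abs_lip; lra.
    - apply nonlin_on_ball; auto. }
  pose proof r_nonneg.
  assert (r * Cmod (Cint (fun z0 => Csub (integrand Gam alpha epsL U y z0)
                                        (integrand Gam alpha epsL U z z0)) (- d) d)
          <= r * (2 * d * (Gam * Rabs (y - z) * K))) by (apply Rmult_le_compat_l; auto).
  nra.
Qed.

Lemma T_op_cont U : Ccont_on d U -> (forall z, in_seg d z -> Cmod (U z) <= p) ->
  Ccont_on d (T_op a kappa Gam d alpha epsL U).
Proof.
  intros HU Hball.
  assert (H0 : in_seg d 0) by (red; lra).
  assert (HK : 0 <= K).
  { pose proof (Cmod_nonneg (U 0)); pose proof (Hball 0 H0).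
    pose proof (Cmod_nonneg (Csub (epsL 0) (Cof 1))); pose proof (HE1 0 H0).
    unfold K; apply Rmult_le_pos; [pose proof (pow2_ge_0 p)|]; nra. }
  apply Ccont_lip with ((a + r * (2 * d) * K) * Gam); [|apply T_op_lip; auto].
  pose proof r_nonneg; apply Rmult_le_pos; [|lra].
  apply Rplus_le_le_0_compat; [lra|]; apply Rmult_le_pos; [apply Rmult_le_pos|exact HK]; lra.
Qed.

Lemma T_op_diff U V : Ccont_on d U -> Ccont_on d V ->
  (forall z, in_seg d z -> Cmod (U z) <= p) -> (forall z, in_seg d z -> Cmod (V z) <= p) ->
  forall z,
  Cmod (Csub (T_op a kappa Gam d alpha epsL U z) (T_op a kappa Gam d alpha epsL V z))
    <= r * (2 * d) * (E1 + 3 * alpha * p ^ 2) * sup_norm d (fun z0 => Csub (U z0) (V z0)).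
Proof.
  intros HU HV HUb HVb z; rewrite !T_op_unfold.
  rewrite Csub_sub_sub, (Csub_mul_l (Cmul Ci _)), Cmod_sub_diag_l; fold r.
  rewrite Cmod_prefactor by apply r_nonneg.
  rewrite Cint_sub by (auto; apply integrand_cont; auto).
  replace (r * (2 * d) * (E1 + 3 * alpha * p ^ 2) * sup_norm d (fun z0 => Csub (U z0) (V z0)))
    with (r * (2 * d * ((E1 + 3 * alpha * p ^ 2) * sup_norm d (fun z0 => Csub (U z0) (V z0)))))
    by ring.
  apply Rmult_le_compat_l; [apply r_nonneg|].
  apply Cint_bound; auto; [apply Ccont_sub; apply integrand_cont; auto|].
  intros z0 Hz0; unfold integrand.
  rewrite Csub_mul_l, Cmod_mul, Cmod_Cexpi, Rmult_1_l.
  eapply Rle_trans; [apply nonlin_lip; auto|].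
  apply Rmult_le_compat_l.
  - pose proof (Cmod_nonneg (Csub (epsL z0) (Cof 1))); pose proof (HE1 z0 Hz0).
    pose proof (pow2_ge_0 p); nra.
  - apply sup_norm_ge with (U := fun z0 => Csub (U z0) (V z0)); auto; apply Ccont_sub; auto.
Qed.

End Operator.

Lemma parameters_pos delta kappa phi :
  0 < delta -> 0 < kappa -> - (PI / 2) < phi < PI / 2 ->
  0 < 2 * PI * delta /\ 0 < kappa * cos phi /\ 0 < 2 * PI * delta * kappa / cos phi /\
  kappa ^ 2 / (2 * (kappa * cos phi)) * (2 * (2 * PI * delta))
    = 2 * PI * delta * kappa / cos phi.
Proof.
  intros Hdelta Hkappa Hphi; pose proof PI_RGT_0.
  assert (Hcos : 0 < cos phi) by (apply cos_gt_0; lra).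
  assert (Hq0 : 0 < 2 * PI * delta * kappa / cos phi).
  { assert (0 < 2 * PI * delta) by nra; apply Rdiv_lt_0_compat; nra. }
  repeat split; try nra; auto.
  field; split; apply Rgt_not_eq; lra.
Qed.

Lemma polar_modulus_bound e e1 e2 E1 : Csub e (Cof 1) = Cmul (Cof e1) (Cexpi e2) ->
  0 <= e1 <= E1 -> Cmod (Csub e (Cof 1)) <= E1.
Proof.
  intros Hpolar He1; rewrite Hpolar, Cmod_mul, Cmod_Cof, Cmod_Cexpi, Rmult_1_r,
    Rabs_pos_eq; lra.
Qed.

(* alpha < alpha_0^(1) is the discriminant condition 27 a^2 A < 4 B^3 for the
   cubic A p^3 - B p + a with A = alpha q0 and B = 1 - E1 q0. *)
Lemma alpha0_discriminant a q0 B alpha : 0 < a -> 0 < q0 ->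
  alpha < 4 / 27 * (1 / a ^ 2) * (B ^ 3 / q0) -> a * a * (alpha * q0) < 4 * B ^ 3 / 27.
Proof.
  intros Ha Hq0 Halpha.
  assert (Ha2q0 : 0 < a ^ 2 * q0) by (apply Rmult_lt_0_compat; nra).
  pose proof (Rmult_lt_compat_r _ _ _ Ha2q0 Halpha) as H.
  replace (4 / 27 * (1 / a ^ 2) * (B ^ 3 / q0) * (a ^ 2 * q0)) with (4 * B ^ 3 / 27) in H
    by (field; split; nra).
  nra.
Qed.

Theorem theorem3
  (delta kappa a alpha phi : R)
  (epsL : R -> Cx) (eps1 eps2 : R -> R) (E1 : R)
  (Hdelta : 0 < delta) (Hkappa : 0 < kappa) (Ha : 0 < a) (Halpha : 0 < alpha)
  (Hphi : - (PI / 2) < phi < PI / 2)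
  (HepsL : Ccont_on (2 * PI * delta) epsL)
  (Heps1c : Rcont_on (2 * PI * delta) eps1)
  (Heps2c : Rcont_on (2 * PI * delta) eps2)
  (Hdecomp : forall z, in_seg (2 * PI * delta) z ->
       Csub (epsL z) (Cof 1) = Cmul (Cof (eps1 z)) (Cexpi (eps2 z)))
  (Heps1 : forall z, in_seg (2 * PI * delta) z -> 1 <= eps1 z)
  (Heps2 : forall z, in_seg (2 * PI * delta) z -> 0 <= eps2 z < PI / 2)
  (HE1max : (forall z, in_seg (2 * PI * delta) z -> eps1 z <= E1) /\
            (exists z, in_seg (2 * PI * delta) z /\ eps1 z = E1))
  (HE1q0 : 0 < E1 * (2 * PI * delta * kappa / cos phi) < 1)
  (Halpha0 : alpha < 4 / 27 * (1 / a ^ 2) *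
       ((1 - E1 * (2 * PI * delta * kappa / cos phi)) ^ 3
         / (2 * PI * delta * kappa / cos phi))) :
  let d := 2 * PI * delta in
  let Gam := kappa * cos phi in
  let q0 := 2 * PI * delta * kappa / cos phi in
  (exists p1 p2, 0 < p1 < p2 /\ PK1 alpha q0 E1 a p1 = 0 /\ PK1 alpha q0 E1 a p2 = 0 /\
     (forall x, 0 < x -> PK1 alpha q0 E1 a x = 0 -> x = p1 \/ x = p2)) /\
  (forall p1 p2 p,
     0 < p1 < p2 -> PK1 alpha q0 E1 a p1 = 0 -> PK1 alpha q0 E1 a p2 = 0 ->
     p1 < p < p2 ->
     q0 * (E1 + 3 * alpha * p ^ 2) < 1 ->
     alpha < / 3 * / (q0 * (1 - E1 * q0)) ->
     (forall U, Ccont_on d U -> sup_norm d U <= p ->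
        Ccont_on d (T_op a kappa Gam d alpha epsL U) /\
        sup_norm d (T_op a kappa Gam d alpha epsL U) <= p) /\
     (forall U V, Ccont_on d U -> sup_norm d U <= p ->
        Ccont_on d V -> sup_norm d V <= p ->
        sup_norm d (fun z => Csub (T_op a kappa Gam d alpha epsL U z)
                                  (T_op a kappa Gam d alpha epsL V z))
          <= q0 * (E1 + 3 * alpha * p ^ 2) * sup_norm d (fun z => Csub (U z) (V z)))).
Proof.
  intros d Gam q0.
  destruct (parameters_pos delta kappa phi Hdelta Hkappa Hphi)
    as (Hd & HGam & Hq0 & Hfactor).
  change (2 * PI * delta * kappa / cos phi) with q0 in HE1q0, Halpha0, Hq0, Hfactor.
  change (2 * PI * delta) with d in HepsL, Hdecomp, Heps1, HE1max, Hd, Hfactor.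
  change (kappa * cos phi) with Gam in HGam, Hfactor.
  clearbody d Gam q0.
  assert (HE1 : forall z, in_seg d z -> Cmod (Csub (epsL z) (Cof 1)) <= E1).
  { intros z Hz; apply (polar_modulus_bound _ (eps1 z) (eps2 z)); auto.
    pose proof (Heps1 z Hz); pose proof (proj1 HE1max z Hz); lra. }
  assert (HPK : forall x, PK1 alpha q0 E1 a x = alpha * q0 * x ^ 3 - (1 - E1 * q0) * x + a)
    by reflexivity.
  assert (HA : 0 < alpha * q0) by nra.
  split.
  - destruct (cubic_two_roots (alpha * q0) (1 - E1 * q0) a HA ltac:(lra) Ha
                (alpha0_discriminant a q0 _ alpha Ha Hq0 Halpha0)) as [p1 [p2 [Hp [H1 H2]]]].
    exists p1, p2; rewrite !HPK; repeat split; try lra.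
    intros x Hx; rewrite HPK; apply cubic_positive_roots; auto.
  - intros p1 p2 p Hp12 H1 H2 Hp _ _; rewrite HPK in H1, H2.
    (* P_K^(1)(p) < 0 means a + q0 (E1 + alpha p^2) p < p *)
    pose proof (cubic_neg_between _ _ _ p1 p2 p HA Hp12 H1 H2 Hp) as Hneg.
    assert (Hinvariant : a + q0 * ((E1 + alpha * p ^ 2) * p) <= p) by nra.
    rewrite <- Hfactor in Hinvariant |- *.
    assert (Hball : forall U, Ccont_on d U -> sup_norm d U <= p ->
                      forall z, in_seg d z -> Cmod (U z) <= p)
      by (intros U HU HUs z Hz; eapply Rle_trans; [apply sup_norm_ge|]; eauto; lra).
    assert (HTcont : forall U, Ccont_on d U -> sup_norm d U <= p ->
                       Ccont_on d (T_op a kappa Gam d alpha epsL U))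
      by (intros; eapply T_op_cont; eauto; lra).
    split.
    + intros U HU HUs; split; auto; apply sup_norm_le; [lra | auto|]; intros z _.
      eapply Rle_trans; [eapply T_op_bound; eauto; lra | exact Hinvariant].
    + intros U V HU HUs HV HVs; apply sup_norm_le; [lra | apply Ccont_sub; auto|].
      intros z _; eapply T_op_diff; eauto; lra.
Qed.
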